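(* No finite Blaschke product of degree $\ge2$ is outer regular; that is, if $\phi(z)=\omega\prod_{j=1}^d\frac{a_j-z}{1-\overline{a_j}z}$ with $|\omega|=1$, $a_j\in\mathbb{U}$ and $d\ge2$, then $\phi$ has a critical value in $\{z\in\hat{\mathbb{C}}:|z|\ge1\}\cup\{\infty\}$.
   Context: $\mathbb{U}$ is the open unit disc, $\hat{\mathbb{C}}$ the Riemann sphere. Rational functions are regarded as maps $\hat{\mathbb{C}}\to\hat{\mathbb{C}}$; the degree of $p/q$ (relatively prime polynomials) is $\max(\deg p,\deg q)$. A point $w$ is a regular value of a rational function $R$ of degree $d$ if $R^{-1}(\{w\})$ consists of $d$ distinct points, and a critical value otherwise. A rational self-map $\phi$ of $\mathbb{U}$ is outer regular if all its critical values lie in $\mathbb{U}$, i.e. every point of $\{|z|\ge1\}\cup\{\infty\}$ is a regular value of $\phi$. *)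

From mathcomp Require Import all_boot all_order all_algebra.
From mathcomp.real_closed Require Import complex.
Set Implicit Arguments. Unset Strict Implicit. Unset Printing Implicit Defensive.
Import Order.TTheory GRing.Theory Num.Theory.
Local Open Scope ring_scope.

Section Rational.
Variable R : rcfType.
Local Notation C := (R[i]).

(* The Riemann sphere: [Some z] is the finite point z, [None] is infinity. *)
Definition sphere := option C.

(* degree of the rational function p/q (p, q relatively prime, q <> 0):
   max(deg p, deg q). *)
Definition rdeg (p q : {poly C}) : nat := (maxn (size p) (size q)).-1.

Definition reval (p q : {poly C}) (z : sphere) : sphere :=
  match z with
  | Some z => if q.[z] != 0 then Some (p.[z] / q.[z]) else None
  | None => if (size q < size p)%N then None
            else if (size p == size q)%N then Some (lead_coef p / lead_coef q)
            else Some 0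
  end.

Definition regular_value (p q : {poly C}) (w : sphere) : Prop :=
  exists s : seq sphere, [/\ uniq s, size s = rdeg p q &
                             forall z, reval p q z = w <-> z \in s].

Definition critical_value (p q : {poly C}) (w : sphere) : Prop :=
  ~ regular_value p q w.

(* Finite Blaschke product  omega * prod_j (a_j - z)/(1 - conj(a_j) z),
   given by its numerator and denominator (which are coprime when all
   |a_j| < 1). *)
Definition blaschke_num (omega : C) (a : seq C) : {poly C} :=
  omega%:P * \prod_(aj <- a) (aj%:P - 'X).
Definition blaschke_den (a : seq C) : {poly C} :=
  \prod_(aj <- a) (1 - (aj^*)%:P * 'X).

End Rational.

(* The Wronskian W = p'q - pq' of a rational map p/q of degree n >= 2 is a
   nonconstant polynomial, so it vanishes at some point z. Then z is a double
   point of the fibre over p(z)/q(z), or over infinity when q(z) = 0, so that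
   fibre has fewer than n points: every such map has a critical value.
   A Blaschke product commutes with the reflection z |-> 1/conj(z) in the unit
   circle, hence the reflection maps critical values to critical values, and a
   critical value in the open disc reflects to one outside it. *)

From mathcomp Require Import all_boot all_order all_algebra.
From mathcomp.real_closed Require Import complex.
From mathcomp Require Import zify ring.
Set Implicit Arguments. Unset Strict Implicit. Unset Printing Implicit Defensive.
Import Order.TTheory GRing.Theory Num.Theory.
Local Open Scope ring_scope.

Lemma coefM_addn (F : nzSemiRingType) (p q : {poly F}) (i j : nat) :
  (size p <= i.+1)%N -> (size q <= j.+1)%N -> (p * q)`_(i + j) = p`_i * q`_j.
Proof.
move=> sp sq; rewrite coefM.
have ltij : (i < (i + j).+1)%N by rewrite ltnS leq_addr.
rewrite (bigD1 (Ordinal ltij)) //= addKn big1 ?addr0 // => k /eqP neq_ki.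
have [ltki|leik] := ltnP k i.
  by rewrite [q`_ _](leq_sizeP _ _ sq) ?mulr0 //; have := ltn_ord k; lia.
have ltik : (i < k)%N.
  rewrite ltn_neqAle leik andbT; apply/eqP => eik.
  by apply: neq_ki; apply: val_inj.
by rewrite [p`_ _](leq_sizeP _ _ sp) ?mul0r.
Qed.

Definition wronskian (F : nzRingType) (p q : {poly F}) := p^`() * q - p * q^`().

Lemma wronskian_subr (F : comNzRingType) (p q : {poly F}) (c : F) :
  wronskian p q = - wronskian q (p - c%:P * q).
Proof. by rewrite /wronskian derivB derivM derivC mul0r add0r; ring. Qed.

(* The coefficient of W(p, q) in degree deg p + deg q - 1 is
   (deg p - deg q) * lead_coef p * lead_coef q. *)
Lemma size_wronskian_ge (F : numDomainType) (p q : {poly F}) :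
  p != 0 -> q != 0 -> (2 <= size p)%N -> size p != size q ->
  (size p + size q - 2 <= size (wronskian p q))%N.
Proof.
move=> p0 q0 sp neq; have sq : (1 <= size q)%N by rewrite size_poly_gt0.
set k := (size p - 2 + (size q - 1))%N.
have lcp : p`_(size p - 1) = lead_coef p by rewrite lead_coefE subn1.
have lcq : q`_(size q - 1) = lead_coef q by rewrite lead_coefE subn1.
have dp : (p^`() * q)`_k = lead_coef p * lead_coef q *+ (size p - 1).
  rewrite coefM_addn ?coef_deriv -?lcp -?lcq; last 2 first.
  - by have := lt_size_deriv p0; lia.
  - by lia.
  by rewrite mulrnAl (_ : (size p - 2).+1 = size p - 1)%N //; lia.
have dq : (p * q^`())`_k = lead_coef p * lead_coef q *+ (size q - 1).
  have [/eqP/size_poly1P [c _ ->]|nq1] := eqVneq (size q) 1%N.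
    by rewrite derivC mulr0 coef0 size_polyC; case: eqP.
  rewrite (_ : k = size p - 1 + (size q - 2))%N; last by lia.
  rewrite coefM_addn ?coef_deriv -?lcp -?lcq; last 2 first.
  - by lia.
  - by have := lt_size_deriv q0; lia.
  by rewrite mulrnAr (_ : (size q - 2).+1 = size q - 1)%N //; lia.
have Wk : (wronskian p q)`_k != 0.
  rewrite coefB dp dq -[_ *+ (size p - 1)]mulr_natr -[_ *+ (size q - 1)]mulr_natr.
  rewrite -mulrBr !mulf_neq0 ?lead_coef_eq0 //.
  by rewrite subr_eq0 eqr_nat; apply: contra neq => /eqP; lia.
suff : (k < size (wronskian p q))%N by lia.
by rewrite ltnNge; apply: contra Wk => /leq_sizeP ->.
Qed.

Lemma size_uniq_roots_double_root (F : idomainType) (f : {poly F}) z s :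
  f != 0 -> root f z -> root f^`() z -> uniq s -> all (root f) s ->
  (size s + 2 <= size f)%N.
Proof.
move=> f0 /factor_theorem [g def_f] f'z us fs.
have g0 : g != 0 by apply: contraNneq f0 => g0; rewrite def_f g0 mul0r.
have gz : root g z.
  by move: f'z; rewrite def_f derivM derivXsubC mulr1 /root !hornerE subrr mulr0 add0r.
have gs : all (root g) s.
  apply/allP => x xs; have [-> //|neq_xz] := eqVneq x z.
  by move/allP: fs => /(_ x xs); rewrite def_f rootM root_XsubC (negPf neq_xz) orbF.
have := max_poly_roots g0 gs us.
by rewrite def_f size_mul ?polyXsubC_eq0 // size_XsubC addn2 /= => ?; lia.
Qed.

Lemma subr_polyCM_neq0 (F : closedFieldType) (p q : {poly F}) (c : F) :
  (forall x, root p x -> ~~ root q x) -> (1 < size p)%N -> p - c%:P * q != 0.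
Proof.
move=> pq sp; have [x px] : exists x, root p x by apply/closed_rootP; lia.
apply: contraNneq (pq x px) => /eqP; rewrite subr_eq0 => /eqP def_p.
have c0 : c != 0 by apply: contraTneq sp => c0; rewrite def_p c0 mul0r size_poly0.
by move: px; rewrite def_p /root hornerM hornerC mulf_eq0 (negPf c0).
Qed.

Lemma size_sub_lead_ratio (F : fieldType) (p q : {poly F}) n :
  size p = n.+1 -> size q = n.+1 ->
  (size (p - (lead_coef p / lead_coef q)%:P * q)%R <= n)%N.
Proof.
move=> sp sq; have q0 : q != 0 by rewrite -size_poly_gt0 sq.
apply/leq_sizeP => j; rewrite leq_eqVlt => /orP [/eqP <-|ltnj].
  by rewrite coefB coefCM -[n]/n.+1.-1 -{1}sp -sq -!lead_coefE divfK ?subrr ?lead_coef_eq0.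
by rewrite coefB coefCM !nth_default ?mulr0 ?subrr ?sp ?sq.
Qed.

Lemma size_subr_polyCM_le (F : nzRingType) (p q : {poly F}) (c : F) n :
  (size p <= n)%N -> (size q <= n)%N -> (size (p - c%:P * q)%R <= n)%N.
Proof.
move=> sp sq; apply/leq_sizeP => j lenj.
by rewrite coefB coefCM !nth_default ?mulr0 ?subrr // (leq_trans sp, leq_trans sq).
Qed.

Lemma size_wronskian_gt1 (F : numClosedFieldType) (p q : {poly F}) n :
  (forall x, root p x -> ~~ root q x) -> size p = n.+1 -> (2 <= n)%N ->
  (size q <= n.+1)%N -> q != 0 -> (1 < size (wronskian p q))%N.
Proof.
move=> pq sp n2 sq q0; have p0 : p != 0 by rewrite -size_poly_gt0 sp.
have q_gt0 : (0 < size q)%N by rewrite size_poly_gt0.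
have [ltqp|leqp] := ltnP (size q) n.+1.
  have := size_wronskian_ge p0 q0; rewrite sp => /(_ (ltnW n2)).
  rewrite eq_sym neq_ltn ltqp => /(_ isT) W_ge; apply: leq_trans W_ge.
  (* [set] identifies occurrences of [size q] that differ only in their
     canonical structure path, which [lia] would treat as distinct atoms. *)
  by set k := size q in q_gt0 *; lia.
have {leqp}sq : size q = n.+1 by apply/eqP; rewrite eqn_leq sq.
rewrite (wronskian_subr _ _ (lead_coef p / lead_coef q)) size_polyN.
set r := p - _ * q.
have r0 : r != 0 by apply: subr_polyCM_neq0 pq _; rewrite sp; exact: ltnW.
have sr : (size r <= n)%N by apply: size_sub_lead_ratio.
have r_gt0 : (0 < size r)%N by rewrite size_poly_gt0.
have := size_wronskian_ge q0 r0; rewrite sq => /(_ (ltnW n2)).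
rewrite neq_ltn ltnS sr orbT => /(_ isT) W_ge; apply: leq_trans W_ge.
by set k := size r in r_gt0 *; lia.
Qed.

Lemma size_option_seq (T : eqType) (s : seq (option T)) :
  uniq s -> size s = (size (pmap id s) + (None \in s))%N.
Proof.
elim: s => [|[x|] s IHs] //= /andP [nxs us].
  by rewrite inE /= IHs.
by rewrite IHs // (negPf nxs) addn0 addn1.
Qed.

Lemma big_mulr_seq (F : comNzRingType) (I : Type) (s : seq I) (c : F) (G : I -> F) :
  \prod_(i <- s) (c * G i) = c ^+ size s * \prod_(i <- s) G i.
Proof.
elim: s => [|i s IHs]; first by rewrite !big_nil mul1r.
by rewrite !big_cons IHs exprS /=; ring.
Qed.

Lemma one_subCX_factor (F : fieldType) (c : F) :
  c != 0 -> 1 - c%:P * 'X = (- c)%:P * ('X - (c^-1)%:P).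
Proof. by move=> c0; rewrite mulrBr -polyCM mulNr divff // !polyCN polyC1; ring. Qed.

Lemma size_1_subCX (F : fieldType) (c : F) : size (1 - c%:P * 'X) = (c != 0).+1.
Proof.
have [->|c0] := eqVneq c 0; first by rewrite mul0r subr0 size_poly1.
by rewrite one_subCX_factor // size_Cmul ?oppr_eq0 // size_XsubC.
Qed.

Lemma lead_coef_1_subCX (F : fieldType) (c : F) :
  c != 0 -> lead_coef (1 - c%:P * 'X) = - c.
Proof.
by move=> c0; rewrite one_subCX_factor // lead_coefM lead_coefC lead_coefXsubC mulr1.
Qed.

Section RationalMaps.
Variable R : rcfType.
Local Notation C := R[i].

Lemma critical_value_of_double_root (p q f : {poly C}) (w : sphere R) z :
  f != 0 -> root f z -> root f^`() z -> (size f <= (rdeg p q).+1)%N ->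
  (forall x, reval p q (Some x) = w -> root f x) ->
  (reval p q None = w -> (size f <= rdeg p q)%N) ->
  critical_value p q w.
Proof.
move=> f0 fz f'z sf fin inf [s [us ss sw]].
have ufin : uniq (pmap id s) by apply: (pmap_uniq (g := Some)) => // -[].
have rfin : all (root f) (pmap id s).
  by apply/allP => x; rewrite mem_pmap map_id => /sw /fin.
have := size_uniq_roots_double_root f0 fz f'z ufin rfin.
have := size_option_seq us; rewrite ss.
case: (boolP (None \in s)) => [/sw/inf|_] /=; move: sf;
  by set k := size f; set m := size (pmap id s); set d := rdeg p q; lia.
Qed.

Section WronskianRoot.
Variables (p q : {poly C}) (n : nat) (z : C).
Hypotheses (pq : forall x, root p x -> ~~ root q x) (sp : size p = n.+1).
Hypotheses (sq : (size q <= n.+1)%N) (Wz : root (wronskian p q) z).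

Let rdeg_pq : rdeg p q = n.
Proof. by rewrite /rdeg sp (maxn_idPl sq). Qed.

Let horner_wronskian_root : p^`().[z] * q.[z] = p.[z] * q^`().[z].
Proof. by apply/eqP; rewrite -subr_eq0; move: Wz; rewrite /root /wronskian !hornerE. Qed.

Lemma critical_value_infty_of_pole : q != 0 -> q.[z] = 0 -> critical_value p q None.
Proof.
move=> q0 qz; have pz : p.[z] != 0 by apply/negP => /pq; rewrite /root qz eqxx.
apply: (@critical_value_of_double_root _ _ q _ z q0); rewrite ?rdeg_pq //.
- by rewrite /root qz.
- by move: horner_wronskian_root; rewrite qz mulr0 => /esym/eqP; rewrite mulf_eq0 (negPf pz).
- by move=> x /=; case: ifPn => // /negPn.
- by rewrite /= sp; case: ltnP => // _; case: eqP.
Qed.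

Lemma critical_value_at_wronskian_root :
  (2 <= n)%N -> q.[z] != 0 -> critical_value p q (Some (p.[z] / q.[z])).
Proof.
move=> n2 qz; set c := p.[z] / q.[z].
apply: (@critical_value_of_double_root _ _ (p - c%:P * q) _ z); rewrite ?rdeg_pq.
- by apply: subr_polyCM_neq0 pq _; rewrite sp; exact: ltnW.
- by rewrite /root !hornerE /c divfK ?subrr.
- apply/eqP/(mulIf qz); rewrite mul0r derivB deriv_mulC !hornerE mulrBl.
  by rewrite horner_wronskian_root /c mulrAC divfK ?subrr.
- by apply: size_subr_polyCM_le; rewrite ?sp.
- move=> x /=; case: ifPn => // qx [<-].
  by rewrite /root !hornerE divfK ?subrr.
- rewrite /= sp; case: ltnP => // le_pq.
  have {le_pq}sq' : size q = n.+1 by apply/eqP; rewrite eqn_leq sq.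
  by rewrite sq' eqxx => -[<-]; exact: size_sub_lead_ratio.
Qed.

End WronskianRoot.

Lemma exists_critical_value (p q : {poly C}) n :
  (forall x, root p x -> ~~ root q x) -> size p = n.+1 -> (2 <= n)%N ->
  (size q <= n.+1)%N -> q != 0 -> exists w, critical_value p q w.
Proof.
move=> pq sp n2 sq q0.
have [z Wz] : exists z, root (wronskian p q) z.
  by apply/closed_rootP; rewrite neq_ltn (size_wronskian_gt1 pq sp n2 sq q0) orbT.
have [qz|qz] := eqVneq q.[z] 0.
  by exists None; exact: critical_value_infty_of_pole pq sp sq Wz q0 qz.
by exists (Some (p.[z] / q.[z])); exact: critical_value_at_wronskian_root pq sp sq Wz n2 qz.
Qed.

Definition sphere_reflect (w : sphere R) : sphere R :=
  if w is Some z then (if z == 0 then None else Some (z^*)^-1) else Some 0.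

Lemma sphere_reflectK : involutive sphere_reflect.
Proof.
case=> [z|] /=; last by rewrite eqxx.
have [-> //|z0] := eqVneq z 0.
by rewrite /= invr_eq0 conjC_eq0 (negPf z0) fmorphV /= conjCK invrK.
Qed.

Definition outside_disc (w : sphere R) : Prop :=
  w = None \/ exists z, w = Some z /\ 1 <= `|z|.

Lemma outside_disc_or_reflect w : outside_disc w \/ outside_disc (sphere_reflect w).
Proof.
case: w => [z|]; last by left; left.
have [z1|z1] := boolP (1 <= `|z|); first by left; right; exists z.
right; rewrite /=; have [_|z0] := eqVneq z 0; first by left.
right; exists (z^*)^-1; split=> //.
by rewrite normfV norm_conjC invf_ge1 ?normr_gt0 // ltW // real_ltNge ?normr_real ?real1.
Qed.

Lemma regular_value_involution (h : sphere R -> sphere R) (p q : {poly C}) w :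
  involutive h -> (forall z, reval p q (h z) = h (reval p q z)) ->
  regular_value p q (h w) -> regular_value p q w.
Proof.
move=> hK hpq [s [us ss sw]]; have h_inj := can_inj hK.
exists (map h s); split; rewrite ?map_inj_uniq ?size_map // => z.
by rewrite -{2}(hK z) mem_map // -sw hpq; split=> [->|/h_inj].
Qed.

Lemma reval_reflect_point (p q : {poly C}) x y k :
  (forall x, root p x -> ~~ root q x) -> k != 0 ->
  p.[y] = k * (q.[x])^* -> q.[y] = k * (p.[x])^* ->
  reval p q (Some y) = sphere_reflect (reval p q (Some x)).
Proof.
move=> pq k0 py qy; rewrite /= py qy.
have [qx|qx] := eqVneq q.[x] 0.
  have px : p.[x] != 0 by apply/negP => /pq; rewrite /root qx eqxx.
  by rewrite qx rmorph0 mulr0 mulf_neq0 ?conjC_eq0 //= mul0r.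
have [px|px] := eqVneq p.[x] 0; first by rewrite px rmorph0 mulr0 eqxx /= mul0r /= eqxx.
rewrite mulf_neq0 ?conjC_eq0 //= mulf_eq0 invr_eq0 (negPf px) (negPf qx) /=.
by rewrite -mulf_div divff // mul1r fmorph_div invf_div.
Qed.

End RationalMaps.

Section Blaschke.
Variables (R : rcfType) (omega : R[i]) (a : seq R[i]).
Local Notation num := (blaschke_num omega a).
Local Notation den := (blaschke_den a).
Local Notation nonzero := (fun aj : R[i] => aj != 0).

Lemma horner_blaschke_num x : num.[x] = omega * \prod_(aj <- a) (aj - x).
Proof.
rewrite /blaschke_num hornerM hornerC horner_prod.
by under eq_bigr do rewrite !hornerE.
Qed.

Lemma horner_blaschke_den x : den.[x] = \prod_(aj <- a) (1 - aj^* * x).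
Proof. by rewrite /blaschke_den horner_prod; under eq_bigr do rewrite !hornerE. Qed.

Lemma blaschke_numE :
  num = (omega * (-1) ^+ size a)%:P * \prod_(aj <- a) ('X - aj%:P).
Proof.
rewrite /blaschke_num polyCM -mulrA polyC_exp polyCN polyC1 -big_mulr_seq.
by congr (_ * _); apply: eq_bigr => aj _; rewrite mulN1r opprB.
Qed.

Lemma size_blaschke_num : omega != 0 -> size num = (size a).+1.
Proof.
by move=> omega0; rewrite blaschke_numE size_Cmul ?size_prod_XsubC ?mulf_neq0 ?signr_eq0.
Qed.

Lemma lead_coef_blaschke_num : lead_coef num = omega * (-1) ^+ size a.
Proof. by rewrite blaschke_numE lead_coefM lead_coefC lead_coef_prod_XsubC mulr1. Qed.

Lemma size_blaschke_den : size den = (count nonzero a).+1.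
Proof.
rewrite /blaschke_den; elim: a => [|aj s IHs]; first by rewrite big_nil size_poly1.
rewrite big_cons size_mul -?size_poly_gt0 ?IHs ?size_1_subCX // conjC_eq0 /=.
by case: (aj != 0).
Qed.

Lemma lead_coef_blaschke_den :
  all nonzero a -> lead_coef den = \prod_(aj <- a) - aj^*.
Proof.
move=> /allP a0; rewrite /blaschke_den lead_coef_prod big_seq [RHS]big_seq.
by apply: eq_bigr => aj /a0 aj0; rewrite lead_coef_1_subCX ?conjC_eq0.
Qed.

Hypothesis omega_unit : `|omega| = 1.
Hypothesis a_disc : forall aj, aj \in a -> `|aj| < 1.

Let omega_neq0 : omega != 0.
Proof. by rewrite -normr_eq0 omega_unit oner_eq0. Qed.

Let omega_conj : omega^* = omega^-1.
Proof. by apply: (mulfI omega_neq0); rewrite -normCK omega_unit expr1n divff. Qed.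

Lemma blaschke_coprime x : root num x -> ~~ root den x.
Proof.
rewrite /root horner_blaschke_num horner_blaschke_den mulf_eq0 (negPf omega_neq0).
rewrite prodf_seq_eq0 => /hasP [ak ak_a]; rewrite /= subr_eq0 => /eqP <-{x}.
rewrite prodf_seq_eq0; apply/hasPn => aj aj_a /=; rewrite subr_eq0 eq_sym.
have lt1 : `|aj^* * ak| < 1.
  rewrite normrM norm_conjC; apply: le_lt_trans (a_disc ak_a).
  by apply: ler_piMl; [exact: normr_ge0 | exact: ltW (a_disc aj_a)].
by apply: contraTneq lt1 => ->; rewrite normr1 ltxx.
Qed.

Lemma reval_blaschke_0 : reval num den (Some 0) = Some (omega * \prod_(aj <- a) aj).
Proof.
rewrite /= horner_blaschke_den big1 => [|aj _]; last by rewrite mulr0 subr0.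
by rewrite oner_neq0 divr1 horner_blaschke_num; under eq_bigr do rewrite subr0.
Qed.

Lemma reval_blaschke_infty : reval num den None =
  if all nonzero a then Some (omega / \prod_(aj <- a) aj^*) else None.
Proof.
rewrite /= size_blaschke_num // size_blaschke_den ltnS.
have [a0|a_0] := boolP (all nonzero a); last first.
  by rewrite ltn_neqAle -all_count a_0 count_size.
have -> : count nonzero a = size a by apply/eqP; rewrite -all_count.
rewrite ltnn eqxx lead_coef_blaschke_num lead_coef_blaschke_den //.
rewrite (eq_bigr (fun aj => -1 * aj^*)) => [|aj _]; last by rewrite mulN1r.
by rewrite big_mulr_seq invfM mulrA mulfK ?signr_eq0.
Qed.

Lemma reval_blaschke_infty_reflect :
  reval num den None = sphere_reflect (reval num den (Some 0)).
Proof.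
rewrite reval_blaschke_infty reval_blaschke_0 /=.
have [a0|a_0] := boolP (all nonzero a); last first.
  suff -> : \prod_(aj <- a) aj = 0 by rewrite mulr0 eqxx.
  apply/eqP; rewrite prodf_seq_eq0; move: a_0; rewrite -has_predC.
  by apply: sub_has => aj /negPn.
have P0 : \prod_(aj <- a) aj != 0 by rewrite prodf_seq_neq0.
rewrite mulf_eq0 (negPf omega_neq0) (negPf P0) /= rmorphM /= rmorph_prod omega_conj.
by rewrite invfM invrK.
Qed.

Lemma horner_blaschke_num_reflect x : x != 0 ->
  num.[(x^*)^-1] = omega * (- (x^*)^-1) ^+ size a * (den.[x])^*.
Proof.
move=> x0; rewrite horner_blaschke_num horner_blaschke_den rmorph_prod -mulrA -big_mulr_seq.
congr (_ * _); apply: eq_bigr => aj _; rewrite rmorphB rmorph1 rmorphM /= conjCK.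
by field; rewrite conjC_eq0.
Qed.

Lemma horner_blaschke_den_reflect x : x != 0 ->
  den.[(x^*)^-1] = omega * (- (x^*)^-1) ^+ size a * (num.[x])^*.
Proof.
move=> x0; rewrite horner_blaschke_num horner_blaschke_den rmorphM /= rmorph_prod omega_conj.
rewrite mulrCA -mulrA mulKf // -big_mulr_seq.
apply: eq_bigr => aj _; rewrite rmorphB.
by field; rewrite conjC_eq0.
Qed.

Lemma reval_blaschke_reflect z :
  reval num den (sphere_reflect z) = sphere_reflect (reval num den z).
Proof.
case: z => [x|]; last by rewrite reval_blaschke_infty_reflect sphere_reflectK.
have [->|x0] := eqVneq x 0; first by rewrite /= eqxx reval_blaschke_infty_reflect.
rewrite /= (negPf x0); apply: reval_reflect_point blaschke_coprime _
  (horner_blaschke_num_reflect x0) (horner_blaschke_den_reflect x0).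
by rewrite mulf_neq0 // expf_neq0 // oppr_eq0 invr_eq0 conjC_eq0.
Qed.

End Blaschke.

Theorem proposition4p4 (R : rcfType) (omega : R[i]) (a : seq R[i]) :
  `|omega| = 1 ->
  (forall aj, aj \in a -> `|aj| < 1) ->
  (2 <= size a)%N ->
  exists w : sphere R,
    (w = None \/ exists z : R[i], w = Some z /\ 1 <= `|z|) /\
    critical_value (blaschke_num omega a) (blaschke_den a) w.
Proof.
move=> omega_unit a_disc size_a.
have omega0 : omega != 0 by rewrite -normr_eq0 omega_unit oner_eq0.
have [w crit_w] : exists w, critical_value (blaschke_num omega a) (blaschke_den a) w.
  apply: (exists_critical_value (blaschke_coprime omega_unit a_disc)
                                (size_blaschke_num a omega0) size_a).
  - by rewrite size_blaschke_den ltnS count_size.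
  - by rewrite -size_poly_gt0 size_blaschke_den.
have [out_w|out_rw] := outside_disc_or_reflect w; first by exists w.
exists (sphere_reflect w); split=> //.
by move/(regular_value_involution (@sphere_reflectK R)
          (reval_blaschke_reflect omega_unit a_disc)).
Qed.
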